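(* Let $n\ge 2$, $c\in\mathbb R$, $d>0$, $\overline K>K>0$, $\eta:=(\overline K-K)/4$, $v\in C^1(\mathbb R^n)$, and $\Gamma\subseteq{\rm C}(d,K)$. Let $Z_\star:=\{x'\in\overline{B^{n-1}_d}: {\rm r}(x')\cap\{v=c\}\ne\varnothing\}$. Suppose that $\{v=c\}\cap{\rm C}(d,\overline K)\ne\varnothing$, that $\{v=c\}\cap{\rm C}(d,\overline K)\subseteq\Gamma_\eta:=\bigcup_{p\in\Gamma}B_\eta(p)$, and that $\partial_n v(x)>0$ for all $x\in\mathbb R^n$. Then $Z_\star=\overline{B^{n-1}_d}$.
   Context: Points of $\mathbb R^n$ are written $x=(x',x_n)\in\mathbb R^{n-1}\times\mathbb R$, and $\partial_n=\partial/\partial x_n$. For $d,h>0$, ${\rm C}(d,h):=\{x\in\mathbb R^n: |x'|<d,\ |x_n|<h\}$. $B^{n-1}_d$ is the open ball of radius $d$ centered at $0$ in $\mathbb R^{n-1}$; $B_\eta(p)$ is the open ball in $\mathbb R^n$. For $x'\in\mathbb R^{n-1}$, ${\rm r}(x'):=\{(x',t): t\in\mathbb R\}$. *)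

(* Points of R^n, n = m.+1 (m >= 1), are row vectors 'rV[R]_(m.+1). *)
From HB Require Import structures.
From mathcomp Require Import all_boot all_order all_algebra.
From mathcomp Require Import all_classical all_reals all_analysis.
Set Implicit Arguments. Unset Strict Implicit. Unset Printing Implicit Defensive.
Import Order.TTheory GRing.Theory Num.Theory numFieldNormedType.Exports.
Local Open Scope classical_set_scope.
Local Open Scope ring_scope.

Section Defs.
Variable R : realType.

(* Euclidean norm on R^k (the library norm on matrices is the sup norm). *)
Definition enorm (k : nat) (x : 'rV[R]_k) : R := Num.sqrt (\sum_(i < k) x 0 i ^+ 2).

(* x = (x', t) in R^(m.+1) = R^m x R *)
Definition pt (m : nat) (x' : 'rV[R]_m) (t : R) : 'rV[R]_m.+1 :=
  \row_(i < m.+1) (match @insub nat (fun k => (k < m)%N) 'I_m (nat_of_ord i) with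
                    | Some j => x' 0 j | None => t end).
Definition xprime (m : nat) (x : 'rV[R]_m.+1) : 'rV[R]_m :=
  \row_(i < m) x 0 (widen_ord (leqnSn m) i).
Definition xlast (m : nat) (x : 'rV[R]_m.+1) : R := x 0 ord_max.

Definition ebasis (k : nat) (i : 'I_k) : 'rV[R]_k := delta_mx 0 i.

Definition C1 (k : nat) (v : 'rV[R]_k -> R) : Prop :=
  (forall x, differentiable v x) /\
  (forall i : 'I_k, continuous (fun x => 'D_(ebasis i) v x)).

Definition partial_last (m : nat) (v : 'rV[R]_m.+1 -> R) (x : 'rV[R]_m.+1) : R :=
  'D_(ebasis ord_max) v x.

Definition cyl (m : nat) (d h : R) : set 'rV[R]_m.+1 :=
  [set x | enorm (xprime x) < d /\ `|xlast x| < h].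

Definition eball (k : nat) (p : 'rV[R]_k) (eta : R) : set 'rV[R]_k :=
  [set x | enorm (x - p) < eta].

Definition cball0 (m : nat) (d : R) : set 'rV[R]_m := [set x' | enorm x' <= d].

Definition levelset (k : nat) (v : 'rV[R]_k -> R) (c : R) : set 'rV[R]_k :=
  [set x | v x = c].

Definition nbhd_union (k : nat) (G : set 'rV[R]_k) (eta : R) : set 'rV[R]_k :=
  \bigcup_(p in G) eball p eta.

Definition Zstar (m : nat) (v : 'rV[R]_m.+1 -> R) (c d : R) : set 'rV[R]_m :=
  [set x' | cball0 d x' /\ exists t : R, v (pt x' t) = c].
End Defs.

(* The part of {v = c} inside C(d, Kbar) lies within eta of Gamma, a subset of C(d, K),
   hence in |x_n| < K + eta; so v <> c on the slabs K + eta <= |x_n| < Kbar over the open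
   disc. As d_n v > 0, on the vertical line through a point of {v = c} in C(d, Kbar) we
   have v < c at height -T and v > c at height T, where T = (K + Kbar) / 2 lies in the
   slab. Moving the foot of the line along a segment that stays in the open disc, v - c
   cannot change sign at heights -T and T, so both inequalities hold weakly over the
   whole closed disc, and the intermediate value theorem on each vertical line gives a
   point of {v = c}. *)

From HB Require Import structures.
From mathcomp Require Import all_boot all_order all_algebra.
From mathcomp Require Import all_classical all_reals all_analysis.
From mathcomp Require Import lra.
Set Implicit Arguments. Unset Strict Implicit. Unset Printing Implicit Defensive.
Import Order.TTheory GRing.Theory Num.Theory numFieldNormedType.Exports.
Local Open Scope classical_set_scope.
Local Open Scope ring_scope.

Section Coordinates.
Variables (R : realType) (m : nat).
Implicit Types (a b : 'rV[R]_m) (x : 'rV[R]_m.+1) (s t u : R).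

Lemma xprime_pt a t : xprime (pt a t) = a.
Proof.
apply/rowP => i; rewrite !mxE insubT /= ?ltn_ord // => lt_im.
by congr (a 0 _); apply: val_inj.
Qed.

Lemma xlast_pt a t : xlast (pt a t) = t.
Proof. by rewrite /xlast mxE insubF //= ltnn. Qed.

Lemma pt_xprime_xlast x : pt (xprime x) (xlast x) = x.
Proof.
apply/rowP => i; rewrite !mxE; case: insubP => [j _ ij|].
  by rewrite mxE; congr (x 0 _); apply: val_inj; rewrite /= ij.
rewrite -leqNgt => le_mi; congr (x 0 _); apply: val_inj => /=.
by apply/eqP; rewrite eqn_leq le_mi -ltnS ltn_ord.
Qed.

Lemma pt_affine a b s t u : pt (a + s *: b) (t + s * u) = pt a t + s *: pt b u.
Proof. by apply/rowP => i; rewrite !mxE; case: insub => [j|]; rewrite ?mxE. Qed.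

Lemma pt_ebasis a t : pt a t = t *: ebasis R ord_max + pt a 0.
Proof.
apply/rowP => i; rewrite !mxE; case: insubP => [j _ ij|].
  have /negbTE -> : i != ord_max by apply/eqP => iE; move: (ltn_ord j); rewrite ij iE ltnn.
  by rewrite andbF mulr0 add0r.
rewrite -leqNgt => le_mi.
have -> : i == ord_max by rewrite -(inj_eq val_inj) eqn_leq le_mi -ltnS ltn_ord.
by rewrite mulr1 addr0.
Qed.

Lemma norm_xlast_le_enorm x : `|xlast x| <= enorm x.
Proof.
rewrite /enorm -sqrtr_sqr ler_sqrt; last by apply: sumr_ge0 => i _; exact: sqr_ge0.
by rewrite (bigD1 ord_max) //= lerDl; apply: sumr_ge0 => i _; exact: sqr_ge0.
Qed.

End Coordinates.

Section LineRestriction.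
Variables (R : realType) (k : nat) (v : 'rV[R]_k -> R) (e a : 'rV[R]_k).

Lemma continuous_along_line : (forall x, differentiable v x) ->
  continuous (fun s : R => v (s *: e + a)).
Proof.
move=> dv s; apply: continuous_comp; last exact: differentiable_continuous.
by apply: continuousD; [exact: scalel_continuous | exact: cst_continuous].
Qed.

Let difference_quotient_along_line (t : R) :
  (fun h : R => h^-1 *: (((fun s => v (s *: e + a)) \o shift t) (h *: 1)
                         - v (t *: e + a)))
  = (fun h : R => h^-1 *: ((v \o shift (t *: e + a)) (h *: e) - v (t *: e + a))).
Proof. by apply/funext => h /=; rewrite /shift /= -[h *: 1]/(h * 1) mulr1 scalerDl addrA. Qed.

Lemma derivable_along_line (t : R) : differentiable v (t *: e + a) ->
  derivable (fun s : R => v (s *: e + a)) t 1.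
Proof. by move=> dv; rewrite /derivable difference_quotient_along_line; exact: diff_derivable. Qed.

Lemma derive1_along_line (t : R) :
  derive1 (fun s : R => v (s *: e + a)) t = 'D_e v (t *: e + a).
Proof. by rewrite derive1E /derive difference_quotient_along_line. Qed.

End LineRestriction.

Section LastCoordinate.
Variables (R : realType) (m : nat) (v : 'rV[R]_m.+1 -> R).
Hypothesis v_diff : forall x, differentiable v x.

Lemma continuous_pt_last (y : 'rV[R]_m) : continuous (fun t => v (pt y t)).
Proof.
have -> : (fun t => v (pt y t)) = (fun t => v (t *: ebasis R ord_max + pt y 0)).
  by apply/funext => t; rewrite pt_ebasis.
exact: continuous_along_line.
Qed.

Lemma continuous_pt_segment (a y : 'rV[R]_m) (t : R) :
  continuous (fun s : R => v (pt (a + s *: (y - a)) t)).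
Proof.
have -> : (fun s : R => v (pt (a + s *: (y - a)) t))
        = (fun s => v (s *: pt (y - a) 0 + pt a t)).
  by apply/funext => s; rewrite [in RHS]addrC -pt_affine mulr0 addr0.
exact: continuous_along_line.
Qed.

Lemma increasing_pt_last (y : 'rV[R]_m) : (forall x, 0 < partial_last v x) ->
  {homo (fun t => v (pt y t)) : s t / s < t}.
Proof.
move=> v_pos s t lt_st; rewrite /= (pt_ebasis y s) (pt_ebasis y t).
apply: (@gtr0_derive1_lt_cc _ (fun u => v (u *: ebasis R ord_max + pt y 0)) s t);
  rewrite ?bound_itvE ?ltW //.
- by move=> u _; exact: derivable_along_line.
- by move=> u _; rewrite derive1_along_line; exact: v_pos.
- exact/continuous_subspaceT/continuous_along_line.
Qed.

Lemma exists_pt_last_level (y : 'rV[R]_m) (s t c : R) : s <= t ->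
  v (pt y s) <= c <= v (pt y t) -> exists u, v (pt y u) = c.
Proof.
move=> le_st /andP[vs_le le_vt].
have [|u _ vu] := @IVT _ _ s t c le_st (continuous_subspaceT (@continuous_pt_last y)).
  by rewrite ge_min le_max vs_le le_vt orbT.
by exists u.
Qed.

End LastCoordinate.

Section EuclideanNorm.
Variables (R : realType) (k : nat).
Implicit Types (x y : 'rV[R]_k) (d : R).

Let sumsq x := \sum_(i < k) x 0 i ^+ 2.

Let sumsq_ge0 x : 0 <= sumsq x.
Proof. by apply: sumr_ge0 => i _; exact: sqr_ge0. Qed.

Let enorm_lt_sqr x d : 0 < d -> (enorm x < d) = (sumsq x < d ^+ 2).
Proof. by move=> d_gt0; rewrite -{1}(gtr0_norm d_gt0) -sqrtr_sqr ltr_sqrt // exprn_gt0. Qed.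

Let enorm_le_sqr x d : 0 < d -> (enorm x <= d) = (sumsq x <= d ^+ 2).
Proof. by move=> d_gt0; rewrite -{1}(gtr0_norm d_gt0) -sqrtr_sqr ler_sqrt // sqr_ge0. Qed.

(* Convexity of the squared norm: the strict inequality at [x] survives because [s < 1]. *)
Lemma enorm_segment_lt x y d s : 0 < d -> enorm x < d -> enorm y <= d ->
  0 <= s < 1 -> enorm (x + s *: (y - x)) < d.
Proof.
move=> d_gt0; rewrite !enorm_lt_sqr // enorm_le_sqr // => ltx ley /andP[s_ge0 s_lt1].
apply: (@le_lt_trans _ _ ((1 - s) * sumsq x + s * sumsq y)); last by nra.
rewrite /sumsq !mulr_sumr -big_split /=; apply: ler_sum => i _; rewrite !mxE.
have : 0 <= s * (1 - s) * (x 0 i - y 0 i) ^+ 2.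
  by rewrite mulr_ge0 ?sqr_ge0 // mulr_ge0 // subr_ge0 ltW.
by nra.
Qed.

End EuclideanNorm.

Lemma ge0_at1_of_nonvanishing (R : realType) (g : R -> R) : continuous g ->
  0 < g 0 -> (forall s, 0 <= s < 1 -> g s != 0) -> 0 <= g 1.
Proof.
move=> g_cont g0_gt0 g_neq0; rewrite leNgt; apply/negP => g1_lt0.
have [|r] := @IVT _ g 0 1 0 ler01 (continuous_subspaceT g_cont).
  by rewrite ge_min le_max (ltW g0_gt0) (ltW g1_lt0) orbT.
rewrite in_itv /= => /andP[r_ge0 r_le1] gr0.
have r_lt1 : r < 1.
  by rewrite lt_neqAle r_le1 andbT; apply/eqP => r1; move: g1_lt0; rewrite -r1 gr0 ltxx.
by move/eqP: gr0; apply/negP/g_neq0; rewrite r_ge0.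
Qed.

Lemma ge0_on_cball_of_nonvanishing (R : realType) (k : nat) (f : 'rV[R]_k -> R)
    (a : 'rV[R]_k) (d : R) :
  0 < d -> enorm a < d -> 0 < f a ->
  (forall x, continuous (fun s : R => f (a + s *: (x - a)))) ->
  (forall y, enorm y < d -> f y != 0) ->
  forall x, enorm x <= d -> 0 <= f x.
Proof.
move=> d_gt0 a_in fa_gt0 f_seg f_neq0 x x_in.
have := @ge0_at1_of_nonvanishing _ (fun s => f (a + s *: (x - a))) (f_seg x).
rewrite /= scale0r addr0 scale1r [a + _]addrC subrK; apply=> // s s_in.
exact/f_neq0/enorm_segment_lt.
Qed.

Section LevelSetOverCylinder.
Variables (R : realType) (m : nat) (c d K Kbar : R).
Variables (v : 'rV[R]_m.+1 -> R) (Gamma : set 'rV[R]_m.+1) (x0 : 'rV[R]_m.+1).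
Hypotheses (d_gt0 : 0 < d) (K_gt0 : 0 < K) (K_lt_Kbar : K < Kbar).
Hypothesis v_diff : forall x, differentiable v x.
Hypothesis v_pos : forall x, 0 < partial_last v x.
Hypothesis Gamma_sub : Gamma `<=` cyl d K.
Hypothesis level_near_Gamma :
  levelset v c `&` cyl d Kbar `<=` nbhd_union Gamma ((Kbar - K) / 4).
Hypotheses (x0_level : levelset v c x0) (x0_cyl : cyl d Kbar x0).

Local Notation eta := ((Kbar - K) / 4).

Lemma level_xlast_lt x : levelset v c x -> cyl d Kbar x -> `|xlast x| < K + eta.
Proof.
move=> x_level x_cyl.
have [p /Gamma_sub [_ p_lt] px_lt] := level_near_Gamma (conj x_level x_cyl).
have xlastB : xlast (x - p) = xlast x - xlast p by rewrite /xlast !mxE.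
rewrite -[xlast x](subrK (xlast p)) -xlastB addrC.
apply: (le_lt_trans (ler_normD _ _)); apply: ltrD => //.
exact: le_lt_trans (norm_xlast_le_enorm _) px_lt.
Qed.

Lemma level_avoids_band y t : enorm y < d -> K + eta <= `|t| < Kbar -> v (pt y t) != c.
Proof.
move=> y_in /andP[band_le band_lt]; apply/eqP => v_yt.
suff /(level_xlast_lt v_yt) : cyl d Kbar (pt y t) by rewrite xlast_pt ltNge band_le.
by split; rewrite ?xprime_pt ?xlast_pt.
Qed.

Local Notation T := ((K + Kbar) / 2).
Local Notation a := (xprime x0).

Let T_in_band : K + eta <= `|T| < Kbar.
Proof. by rewrite ger0_norm; [apply/andP; split|]; move: K_gt0 K_lt_Kbar; lra. Qed.

Let negT_in_band : K + eta <= `|- T| < Kbar.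
Proof. by rewrite normrN. Qed.

Let a_in : enorm a < d.
Proof. by case: x0_cyl. Qed.

Lemma level_brackets_at_x0 : v (pt a (- T)) < c < v (pt a T).
Proof.
have x0_lt := level_xlast_lt x0_level x0_cyl.
have <- : v (pt a (xlast x0)) = c by rewrite pt_xprime_xlast.
apply/andP; split; apply: increasing_pt_last => //.
- by move: K_lt_Kbar x0_lt (ler_norm (- xlast x0)); rewrite normrN; lra.
- by move: K_lt_Kbar x0_lt (ler_norm (xlast x0)); lra.
Qed.

Lemma level_brackets_over_cball y : enorm y <= d -> v (pt y (- T)) <= c <= v (pt y T).
Proof.
have /andP[below above] := level_brackets_at_x0.
move=> y_in; apply/andP; split; rewrite -subr_ge0.
- apply: (@ge0_on_cball_of_nonvanishing _ _ (fun z => c - v (pt z (- T))) a d) => //=.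
  + by rewrite subr_gt0.
  + by move=> z s; apply: continuousB; [exact: cst_continuous | exact: continuous_pt_segment].
  + by move=> z z_in; rewrite subr_eq0 eq_sym; exact: level_avoids_band.
- apply: (@ge0_on_cball_of_nonvanishing _ _ (fun z => v (pt z T) - c) a d) => //=.
  + by rewrite subr_gt0.
  + by move=> z s; apply: continuousB; [exact: continuous_pt_segment | exact: cst_continuous].
  + by move=> z z_in; rewrite subr_eq0; exact: level_avoids_band.
Qed.

Lemma level_meets_vertical_line y : cball0 d y -> exists t, v (pt y t) = c.
Proof.
move=> y_in; apply: (exists_pt_last_level v_diff (s := - T) (t := T)).
  by move: K_gt0 K_lt_Kbar; lra.
exact: level_brackets_over_cball.
Qed.

End LevelSetOverCylinder.

Theorem corollary2p2 (R : realType) (m : nat) (hm : (1 <= m)%N)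
  (c d K Kbar : R) (v : 'rV[R]_m.+1 -> R) (Gamma : set 'rV[R]_m.+1) :
  0 < d -> 0 < K -> K < Kbar ->
  C1 v ->
  Gamma `<=` cyl d K ->
  levelset v c `&` cyl d Kbar !=set0 ->
  levelset v c `&` cyl d Kbar `<=` nbhd_union Gamma ((Kbar - K) / 4) ->
  (forall x, 0 < partial_last v x) ->
  Zstar v c d = @cball0 R m d.
Proof.
move=> d_gt0 K_gt0 K_lt_Kbar [v_diff _] Gamma_sub [x0 [x0_level x0_cyl]] level_near v_pos.
apply/seteqP; split=> [y []//|y y_in]; split=> //.
exact: (level_meets_vertical_line d_gt0 K_gt0 K_lt_Kbar v_diff v_pos Gamma_sub level_near
          x0_level x0_cyl).
Qed.
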